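(* Let $u_1,\dots,u_m\in\mathbf{B}^d\subset\mathbb{R}^d$ and positive weights $c_1,\dots,c_m$ satisfy \[ \sum_{i=1}^m c_i\, u_i\otimes u_i=\mathrm{Id}_d\quad\text{and}\quad \sum_{i=1}^m c_i u_i=0. \] Let $K$ be the convex hull of $u_1,\dots,u_m$. Then $\mathbf{B}^d\subset\big(\sum_{i=1}^m c_i\big)\cdot K$.
   Context: $\mathbf{B}^d$ is the closed Euclidean unit ball in $\mathbb{R}^d$; $u\otimes u$ denotes the linear map $x\mapsto\langle u,x\rangle u$; $\mathrm{Id}_d$ is the identity on $\mathbb{R}^d$. *)

From mathcomp Require Import all_boot all_order all_algebra.
From mathcomp Require Import reals.
Set Implicit Arguments. Unset Strict Implicit. Unset Printing Implicit Defensive.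
Import Order.TTheory GRing.Theory Num.Theory.
Local Open Scope ring_scope.

Definition dotv {R : realType} {d : nat} (x y : 'rV[R]_d) : R :=
  \sum_(k < d) x 0 k * y 0 k.

Definition unit_ball {R : realType} {d : nat} (x : 'rV[R]_d) : Prop :=
  dotv x x <= 1.

(* u (x) u : the linear map x |-> <u,x> u *)
Definition tens {R : realType} {d : nat} (u : 'rV[R]_d) (x : 'rV[R]_d) : 'rV[R]_d :=
  dotv u x *: u.

Definition conv_hull {R : realType} {d m : nat} (u : 'I_m -> 'rV[R]_d)
  (x : 'rV[R]_d) : Prop :=
  exists lam : 'I_m -> R,
    (forall i, 0 <= lam i) /\ \sum_(i < m) lam i = 1 /\
    x = \sum_(i < m) lam i *: u i.

Definition dilate {R : realType} {d : nat} (s : R) (K : 'rV[R]_d -> Prop)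
  (x : 'rV[R]_d) : Prop :=
  exists y, K y /\ x = s *: y.

From mathcomp Require Import all_boot all_order all_algebra.
From mathcomp Require Import reals.
From mathcomp Require Import ring lra.
Set Implicit Arguments. Unset Strict Implicit. Unset Printing Implicit Defensive.
Import Order.TTheory GRing.Theory Num.Theory.
Local Open Scope ring_scope.

(* For x in the unit ball, the weights c_i (1 + <u_i, x>) are nonnegative
   because <u_i, x> >= -1 for u_i, x in the ball.  Centering makes them sum to
   S := sum_i c_i, and the frame identity together with centering gives
   sum_i c_i (1 + <u_i, x>) u_i = x.  Dividing by S exhibits x / S as a convex
   combination of the u_i. *)

Lemma dotv_sumZl (R : realType) (d m : nat) (a : 'I_m -> R) (v : 'I_m -> 'rV[R]_d)
    (x : 'rV[R]_d) :
  dotv (\sum_(i < m) a i *: v i) x = \sum_(i < m) a i * dotv (v i) x.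
Proof.
rewrite /dotv.
under eq_bigr do rewrite summxE big_distrl /=.
rewrite exchange_big /=; apply: eq_bigr => i _.
rewrite big_distrr /=; apply: eq_bigr => k _.
by rewrite mxE mulrA.
Qed.

Lemma dotv0l (R : realType) (d : nat) (x : 'rV[R]_d) : dotv 0 x = 0.
Proof. by rewrite /dotv big1 // => k _; rewrite mxE mul0r. Qed.

Lemma dotvv_ge0 (R : realType) (d : nat) (x : 'rV[R]_d) : 0 <= dotv x x.
Proof. by apply: sumr_ge0 => k _; rewrite -expr2 sqr_ge0. Qed.

Lemma dotvDD (R : realType) (d : nat) (x y : 'rV[R]_d) :
  dotv (x + y) (x + y) = dotv x x + 2 * dotv x y + dotv y y.
Proof.
rewrite /dotv big_distrr -!big_split /=; apply: eq_bigr => k _.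
by rewrite !mxE; ring.
Qed.

Lemma unit_ball_dotv_ge (R : realType) (d : nat) (x y : 'rV[R]_d) :
  unit_ball x -> unit_ball y -> -1 <= dotv x y.
Proof.
rewrite /unit_ball => hx hy.
have := dotvv_ge0 (x + y); rewrite dotvDD; lra.
Qed.

Lemma dilate_conv_hull (R : realType) (d m : nat) (u : 'I_m -> 'rV[R]_d)
    (w : 'I_m -> R) (s : R) :
  0 < s -> (forall i, 0 <= w i) -> \sum_(i < m) w i = s ->
  dilate s (conv_hull u) (\sum_(i < m) w i *: u i).
Proof.
move=> s_gt0 w_ge0 w_sum; have s_neq0 : s != 0 by rewrite gt_eqF.
exists (s^-1 *: \sum_(i < m) w i *: u i).
split; last by rewrite scalerA mulfV // scale1r.
exists (fun i => s^-1 * w i); split; [|split].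
- by move=> i; rewrite mulr_ge0 // invr_ge0 ltW.
- by rewrite -mulr_sumr w_sum mulVf.
- by rewrite scaler_sumr; apply: eq_bigr => i _; rewrite scalerA.
Qed.

Section IsotropicCenteredFrame.

Variables (R : realType) (d m : nat) (u : 'I_m -> 'rV[R]_d) (c : 'I_m -> R).
Hypothesis frame_id : forall x : 'rV[R]_d, \sum_(i < m) c i *: tens (u i) x = x.
Hypothesis frame_centered : \sum_(i < m) c i *: u i = 0.

Lemma frame_weights_sum (x : 'rV[R]_d) :
  \sum_(i < m) c i * (1 + dotv (u i) x) = \sum_(i < m) c i.
Proof.
under eq_bigr do rewrite mulrDr mulr1.
by rewrite big_split /= -dotv_sumZl frame_centered dotv0l addr0.
Qed.

Lemma frame_weights_combination (x : 'rV[R]_d) :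
  \sum_(i < m) (c i * (1 + dotv (u i) x)) *: u i = x.
Proof.
under eq_bigr do rewrite mulrDr mulr1 scalerDl.
rewrite big_split /= frame_centered add0r -[RHS]frame_id.
by apply: eq_bigr => i _; rewrite /tens scalerA.
Qed.

End IsotropicCenteredFrame.

Theorem lemma4p1 (R : realType) (d m : nat) (u : 'I_m -> 'rV[R]_d) (c : 'I_m -> R)
  (hm : (0 < m)%N)
  (hu : forall i, unit_ball (u i))
  (hc : forall i, 0 < c i)
  (hid : forall x : 'rV[R]_d, \sum_(i < m) c i *: tens (u i) x = x)
  (hcent : \sum_(i < m) c i *: u i = 0) :
  forall x : 'rV[R]_d, unit_ball x -> dilate (\sum_(i < m) c i) (conv_hull u) x.
Proof.
move=> x hx.
have sum_c_gt0 : 0 < \sum_(i < m) c i.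
  rewrite (bigD1 (Ordinal hm)) //= ltr_pwDl //.
  by apply: sumr_ge0 => i _; apply: ltW.
rewrite -[X in dilate _ _ X](frame_weights_combination hid hcent x).
apply: dilate_conv_hull => //; last exact: frame_weights_sum.
move=> i; apply: mulr_ge0; first exact: ltW.
by have := unit_ball_dotv_ge (hu i) hx; lra.
Qed.
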